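(* Let $A\subset\mathbb{N}$. Suppose there exist a Følner sequence $\Phi$ in $\mathbb{N}$ and a non-principal ultrafilter $\mathfrak{p}$ on $\mathbb{N}$ such that $\mathsf{d}_\Phi\big((A-n)\cap(A-\mathfrak{p})\big)$ exists for all $n\in\mathbb{N}$ and $$\lim_{n\to\mathfrak{p}}\mathsf{d}_\Phi\big((A-n)\cap(A-\mathfrak{p})\big)>0.$$ Then there exist infinite sets $B,C\subset\mathbb{N}$ such that $B+C\subset A$.
   Context: A Følner sequence in $\mathbb{N}$ is a sequence $\Phi\colon N\mapsto\Phi_N$ of finite non-empty subsets of $\mathbb{N}$ with $|(\Phi_N+m)\triangle\Phi_N|/|\Phi_N|\to0$ for all $m\in\mathbb{N}$. For $E\subset\mathbb{N}$, $\mathsf{d}_\Phi(E)=\lim_{N\to\infty}|E\cap\Phi_N|/|\Phi_N|$ when this limit exists. For $n\in\mathbb{N}$, $A-n=\{m\in\mathbb{N}: m+n\in A\}$, and for an ultrafilter $\mathfrak{p}$ on $\mathbb{N}$, $A-\mathfrak{p}=\{n\in\mathbb{N}: A-n\in\mathfrak{p}\}$. For a bounded function $a\colon\mathbb{N}\to\mathbb{R}$, $\lim_{n\to\mathfrak{p}}a(n)$ denotes the unique $x$ such that $\{n: |a(n)-x|<\epsilon\}\in\mathfrak{p}$ for every $\epsilon>0$. *)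

From HB Require Import structures.
From mathcomp Require Import all_boot all_order all_algebra finmap.
From mathcomp Require Import all_classical all_reals all_analysis.
From mathcomp Require Import Rstruct Rstruct_topology.
From Stdlib Require Import Rdefinitions.
Set Implicit Arguments. Unset Strict Implicit. Unset Printing Implicit Defensive.
Import Order.TTheory GRing.Theory Num.Theory.
Import numFieldNormedType.Exports.
Local Open Scope classical_set_scope.
Local Open Scope fset_scope.
Local Open Scope ring_scope.

(* Convention: N is modelled by Rocq's nat = {0,1,2,...}. *)

(* A - n = {m | m + n \in A} *)
Definition shiftset (A : set nat) (n : nat) : set nat := [set m | A (m + n)%N].

(* A - p = {n | A - n \in p} for an ultrafilter p *)
Definition ushift (A : set nat) (p : set_system nat) : set nat :=
  [set n | p (shiftset A n)].

Definition fshift (F : {fset nat}) (m : nat) : {fset nat} :=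
  [fset (x + m)%N | x in F].

Definition Folner (Phi : nat -> {fset nat}) : Prop :=
  (forall N, Phi N != fset0) /\
  forall m : nat,
    (fun N => (#|` ((fshift (Phi N) m `\` Phi N) `|` (Phi N `\` fshift (Phi N) m)) |%:R
               / #|` Phi N |%:R : R)) @ \oo --> (0 : R).

Definition dens_ratio (Phi : nat -> {fset nat}) (E : set nat) (N : nat) : R :=
  #|` [fset x in Phi N | x \in E] |%:R / #|` Phi N |%:R.

Definition density_is (Phi : nat -> {fset nat}) (E : set nat) (d : R) : Prop :=
  dens_ratio Phi E @ \oo --> d.

Definition plim_is (p : set_system nat) (a : nat -> R) (x : R) : Prop :=
  forall e : R, 0 < e -> p [set n | `|a n - x| < e].

Definition nonprincipal (p : set_system nat) : Prop :=
  forall n : nat, p <> principal_filter n.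

From HB Require Import structures.
From mathcomp Require Import all_boot all_order all_algebra finmap.
From mathcomp Require Import all_classical all_reals all_analysis.
From mathcomp Require Import Rstruct Rstruct_topology.
From Stdlib Require Import Rdefinitions.
From mathcomp Require Import lra.
Set Implicit Arguments. Unset Strict Implicit. Unset Printing Implicit Defensive.
Import Order.TTheory GRing.Theory Num.Theory.
Local Open Scope classical_set_scope.
Local Open Scope ring_scope.

(* Call E ⊆ ℕ shift-dense if for some η > 0, for 𝔭-almost every n, the ratio
   |(A - n) ∩ E ∩ Φ_N| / |Φ_N| exceeds η for 𝔭-almost every N, and
   shift-sparse if the same holds with "exceeds η" replaced by "is at most ε",
   for every ε > 0.  If E is shift-dense and P ∈ 𝔭, some c ∈ P leaves
   (A - c) ∩ E shift-dense.  Otherwise every (A - c) ∩ E with c ∈ P is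
   shift-sparse, and so is any finite union U of them; choosing c ∈ P such that
   (A - c) ∩ E has density > η but meets U in density ≤ η/2, the density of U
   grows by η/2 at each step, which is impossible beyond 2/η steps.
   The hypothesis says that A - 𝔭 is shift-dense.  Starting from E_0 = A - 𝔭
   and P_0 = ℕ, pick c_{k+1} > c_k in P_k with E_{k+1} := (A - c_{k+1}) ∩ E_k
   shift-dense, then b_{k+1} > b_k in E_{k+1} (sets of positive density are
   unbounded, because Følner sets grow), and let
   P_{k+1} := P_k ∩ (A - b_{k+1}), which stays in 𝔭 as b_{k+1} ∈ A - 𝔭.
   For i ≥ j, b_i ∈ E_i ⊆ A - c_j; for i < j, c_j ∈ P_{j-1} ⊆ A - b_i.
   So b_i + c_j ∈ A for all i, j. *)

Section DensityRatio.
Variable Phi : nat -> {fset nat}.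

(* The ascription [: R] in [dens_ratio] puts its quotient in [R_scope], i.e. it
   is Stdlib's [Rdiv]. *)
Lemma dens_ratioE E N :
  dens_ratio Phi E N = #|` [fset x in Phi N | x \in E]%fset|%:R / #|` Phi N|%:R.
Proof. exact: RdivE. Qed.

Lemma dens_ratio_ge0 E N : 0 <= dens_ratio Phi E N.
Proof. by rewrite dens_ratioE divr_ge0. Qed.

Lemma dens_ratio_le1 E N : dens_ratio Phi E N <= 1.
Proof.
rewrite dens_ratioE; have [->|PhiN_gt0] := posnP #|` Phi N|.
  by rewrite mulr0n invr0 mulr0.
by rewrite ler_pdivrMr ?ltr0n // mul1r ler_nat fsubset_leq_card ?fset_sub.
Qed.

Lemma dens_ratio_set0 N : dens_ratio Phi set0 N = 0.
Proof.
rewrite dens_ratioE (_ : [fset x in Phi N | x \in set0]%fset = fset0) ?cardfs0 ?mul0r //.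
by apply/fsetP => x; rewrite !inE in_set0 andbF.
Qed.

Lemma le_dens_ratio E F N : E `<=` F -> dens_ratio Phi E N <= dens_ratio Phi F N.
Proof.
move=> EF; rewrite !dens_ratioE ler_wpM2r ?invr_ge0 // ler_nat fsubset_leq_card //.
by apply/fsubsetP => x; rewrite !inE => /andP[-> /set_mem/EF/mem_set].
Qed.

Lemma dens_ratioUI E F N :
  dens_ratio Phi (E `|` F) N + dens_ratio Phi (E `&` F) N =
  dens_ratio Phi E N + dens_ratio Phi F N.
Proof.
rewrite !dens_ratioE -!mulrDl -!natrD -[in RHS]cardfsUI.
congr (_%:R / _); congr (_ + _)%N; congr #|` _|; apply/fsetP => x;
  by rewrite !inE ?in_setU ?in_setI; case: (x \in Phi N).
Qed.

Lemma dens_ratioU E F N :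
  dens_ratio Phi (E `|` F) N <= dens_ratio Phi E N + dens_ratio Phi F N.
Proof. by rewrite -dens_ratioUI lerDl dens_ratio_ge0. Qed.

Lemma dens_ratio_le_bound E (M : nat) N : E `<=` [set x | (x < M)%nat] ->
  dens_ratio Phi E N <= M%:R / #|` Phi N|%:R.
Proof.
move=> EM; rewrite dens_ratioE ler_wpM2r ?invr_ge0 // ler_nat.
have -> : M = #|` [fset x in iota 0 M]%fset|.
  by rewrite card_fseq undup_id ?size_iota ?iota_uniq.
apply: fsubset_leq_card; apply/fsubsetP => x.
by rewrite !inE mem_iota => /andP[_ /set_mem/EM].
Qed.

End DensityRatio.

Section Ultrafilter.
Context {T : Type} {p : set_system T} {pU : UltraFilter p}.

Lemma ultra_setC (X : set T) : ~ p X -> p (~` X).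
Proof. by case: (in_ultra_setVsetC X pU). Qed.

Lemma ultra_principal x : p [set x] -> p = principal_filter x.
Proof.
move=> px; apply/esym/max_filter; first exact: principal_filter_proper.
move=> W pW; apply/principal_filterP.
by have [y [Wy <-]] := filter_ex (filterI pW px).
Qed.

End Ultrafilter.

Lemma nonprincipal_ultra_ge {p : set_system nat} {pU : UltraFilter p} :
  nonprincipal p -> forall M, p [set n | (M <= n)%nat].
Proof.
move=> np; elim=> [|M IH]; first exact: filterS filterT.
apply: contrapT => /ultra_setC pltM.
have pM : p [set M].
  apply: filterS2 IH pltM => n /= Mn /negP; rewrite -leqNgt => nM.
  by apply/eqP; rewrite eqn_leq nM.
by have := np M; rewrite -(ultra_principal pM).
Qed.

Lemma nonprincipal_ultra_eventually {p : set_system nat} {pU : UltraFilter p} :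
  nonprincipal p -> forall P : set nat, (\forall n \near \oo, P n) -> p P.
Proof.
by move=> np P [M _ MP]; exact: filterS MP (nonprincipal_ultra_ge np M).
Qed.

Lemma fshift1_not_subset (F : {fset nat}) : F != fset0 -> ~~ (fshift F 1 `<=` F)%fset.
Proof.
move=> /fset0Pn[x Fx]; apply/negP => /fsubsetP F1F.
have xkF k : (x + k)%nat \in F.
  elim: k => [|k IH]; first by rewrite addn0.
  by rewrite addnS -addn1; apply/F1F/in_imfset.
have := @leq_bigmax_seq _ _ predT id _ (xkF (\max_(y <- F) y).+1) (erefl true).
by rewrite addnS ltnNge leq_addl.
Qed.

Lemma folner_card_gt Phi : Folner Phi ->
  forall K, \forall N \near \oo, (K < #|` Phi N|)%nat.
Proof.
move=> [Phi_neq0 Phi_inv] K.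
have K1_gt0 : (0 : R) < K.+1%:R^-1 by rewrite invr_gt0 ltr0n.
apply: filterS (cvgr_lt _ (Phi_inv 1%nat) _ K1_gt0) => N /=.
rewrite RdivE => ratio_lt.
have : (#|` Phi N|%:R : R)^-1 < K.+1%:R^-1.
  apply: le_lt_trans ratio_lt; rewrite -[leLHS]mul1r ler_wpM2r ?invr_ge0 //.
  by rewrite ler1n lt0n cardfs_eq0 fsetU_eq0 negb_and fsetD_eq0 fshift1_not_subset.
by rewrite ltf_pV2 ?posrE ?ltr0n ?cardfs_gt0 // ltr_nat => /ltnW.
Qed.

Lemma dens_ratio_unbounded Phi {p : set_system nat} {pU : UltraFilter p} E (a : R) :
  Folner Phi -> nonprincipal p -> 0 < a -> p [set N | a < dens_ratio Phi E N] ->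
  forall M, exists2 x, E x & (M <= x)%nat.
Proof.
move=> FPhi np a_gt0 pE M; apply: contrapT => noE.
have EM : E `<=` [set x | (x < M)%nat].
  by move=> x Ex; rewrite /= ltnNge; apply/negP => Mx; apply: noE; exists x.
pose K := Num.truncn (M%:R / a).
have [N [/= aE KN]] := filter_ex
  (filterI pE (nonprincipal_ultra_eventually np (folner_card_gt FPhi K))).
have := lt_le_trans aE (dens_ratio_le_bound Phi N EM).
apply/negP; rewrite -leNgt ler_pdivrMr ?ltr0n ?(leq_ltn_trans (leq0n K)) //.
rewrite mulrC -ler_pdivrMr // (le_trans (ltW (truncnS_gt _))) // ler_nat.
exact: KN.
Qed.

Lemma infinite_range_incr (g : nat -> nat) :
  (forall k, (g k < g k.+1)%nat) -> infinite_set (range g).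
Proof.
move=> g_incr; apply/infiniteP.
have g_inj : injective g := incn_inj (leq_mono (homo_ltn ltn_trans g_incr)).
by have /card_eqPle[] := inj_card_eq (in2W g_inj) (A := setT).
Qed.

Lemma subset_nonincreasing T (F : nat -> set T) :
  (forall k, F k.+1 `<=` F k) -> forall i j, (i <= j)%nat -> F j `<=` F i.
Proof.
move=> FS; apply: (homo_leq (r := fun X Y => Y `<=` X)).
- by move=> X.
- by move=> Y X Z YX ZY; apply: subset_trans YX.
- exact: FS.
Qed.

Record stage := Stage { st_E : set nat; st_P : set nat; st_b : nat; st_c : nat }.

Section Extension.
Variables (Phi : nat -> {fset nat}) (p : set_system nat) (A : set nat).
Context {pU : UltraFilter p}.

Definition shifts_dense (E : set nat) : Prop :=
  exists2 eta : R, 0 < eta &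
    p [set n | p [set N | eta < dens_ratio Phi (shiftset A n `&` E) N]].

Definition shifts_sparse (E : set nat) : Prop :=
  forall eps : R, 0 < eps ->
    p [set n | p [set N | dens_ratio Phi (shiftset A n `&` E) N <= eps]].

Lemma not_shifts_dense_sparse E : ~ shifts_dense E -> shifts_sparse E.
Proof.
move=> not_dense eps eps_gt0.
have not_pE : ~ p [set n | p [set N | eps < dens_ratio Phi (shiftset A n `&` E) N]].
  by move=> pE; apply: not_dense; exists eps.
apply: (filterS _ (ultra_setC not_pE)) => n /ultra_setC.
by apply: filterS => N /negP; rewrite -leNgt.
Qed.

Lemma shifts_sparse0 : shifts_sparse set0.
Proof.
move=> eps eps_gt0; apply: filterE => n; apply: filterE => N /=.
by rewrite setI0 dens_ratio_set0 ltW.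
Qed.

Lemma shifts_sparseU E F :
  shifts_sparse E -> shifts_sparse F -> shifts_sparse (E `|` F).
Proof.
move=> E_sparse F_sparse eps eps_gt0; have eps2_gt0 : 0 < eps / 2 by rewrite divr_gt0.
apply: filterS2 (E_sparse _ eps2_gt0) (F_sparse _ eps2_gt0) => n pE pF.
apply: filterS2 pE pF => N /= EN FN.
by rewrite setIUr; apply: le_trans (dens_ratioU _ _ _ _) _; lra.
Qed.

Lemma shifts_sparse_union_grows (eta : R) E P : 0 < eta -> p P ->
  p [set n | p [set N | eta < dens_ratio Phi (shiftset A n `&` E) N]] ->
  (forall c, P c -> shifts_sparse (shiftset A c `&` E)) ->
  forall k : nat, exists2 U, shifts_sparse U &
    p [set N | k%:R * (eta / 2) <= dens_ratio Phi U N].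
Proof.
move=> eta_gt0 pP pE P_sparse; have eta2_gt0 : 0 < eta / 2 by rewrite divr_gt0.
elim=> [|k [U U_sparse U_dense]].
  exists set0; first exact: shifts_sparse0.
  by apply: filterE => N /=; rewrite mulr0n mul0r dens_ratio_ge0.
have [c [[Pc Ec_dense] Uc_sparse]] :=
  filter_ex (filterI (filterI pP pE) (U_sparse _ eta2_gt0)).
exists (U `|` (shiftset A c `&` E)); first exact: shifts_sparseU (P_sparse c Pc).
apply: (filterS _ (filterI (filterI U_dense Ec_dense) Uc_sparse)) => N /= [[UN EcN] UcN].
have UEc_sub : U `&` (shiftset A c `&` E) `<=` shiftset A c `&` U.
  by move=> m [Um [Acm _]].
have := le_dens_ratio Phi N UEc_sub; have := dens_ratioUI Phi U (shiftset A c `&` E) N.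
rewrite -natr1 mulrDl mul1r; lra.
Qed.

Lemma shifts_dense_refine E P : shifts_dense E -> p P ->
  exists2 c, P c & shifts_dense (shiftset A c `&` E).
Proof.
move=> [eta eta_gt0 pE] pP; apply: contrapT => no_c.
have P_sparse c : P c -> shifts_sparse (shiftset A c `&` E).
  by move=> Pc; apply: not_shifts_dense_sparse => c_dense; apply: no_c; exists c.
have := truncnS_gt (2 / eta); set k := (Num.truncn _).+1 => k_gt.
have [U _ U_dense] := shifts_sparse_union_grows eta_gt0 pP pE P_sparse k.
have [N /= UN] := filter_ex U_dense.
have := le_trans UN (dens_ratio_le1 Phi U N); apply/negP; rewrite -ltNge.
by move: k_gt; rewrite ltr_pdivrMr // mulrA; lra.
Qed.

Lemma shifts_dense_dens_gt E : shifts_dense E ->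
  exists2 eta : R, 0 < eta & p [set N | eta < dens_ratio Phi E N].
Proof.
move=> [eta eta_gt0 pE]; exists eta => //; have [n pEn] := filter_ex pE.
by apply: (filterS _ pEn) => N /lt_le_trans; apply; apply: le_dens_ratio; exact: subIsetr.
Qed.

Record extends (s t : stage) : Prop := Extends {
  extends_b : (st_b s < st_b t)%nat;
  extends_c : (st_c s < st_c t)%nat;
  extends_cP : st_P s (st_c t);
  extends_bE : st_E t (st_b t);
  extends_E : st_E t `<=` shiftset A (st_c t) `&` st_E s;
  extends_P : st_P t `<=` st_P s `&` shiftset A (st_b t) }.

Hypotheses (FPhi : Folner Phi) (np : nonprincipal p).

Definition admissible (s : stage) : Prop :=
  [/\ shifts_dense (st_E s), p (st_P s) & st_E s `<=` ushift A p].

Lemma plim_density_shifts_dense E d x :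
  (forall n, density_is Phi (shiftset A n `&` E) (d n)) -> plim_is p d x -> 0 < x ->
  shifts_dense E.
Proof.
move=> dE dx x_gt0; have x2_gt0 : 0 < x / 2 by rewrite divr_gt0.
exists (x / 2) => //; apply: (filterS _ (dx _ x2_gt0)) => n /= dnx.
apply: (nonprincipal_ultra_eventually np (cvgr_gt _ (dE n) _ _)).
by move: dnx; rewrite ltr_norml; lra.
Qed.

Lemma admissible_extends s : admissible s -> exists2 t, admissible t & extends s t.
Proof.
case: s => E P b c [/= E_dense pP EAp].
have [c' [Pc' cc'] c'E_dense] :=
  shifts_dense_refine E_dense (filterI pP (nonprincipal_ultra_ge np c.+1)).
have [eta eta_gt0 pE'] := shifts_dense_dens_gt c'E_dense.
have [b' E'b' bb'] := dens_ratio_unbounded FPhi np eta_gt0 pE' b.+1.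
exists (Stage (shiftset A c' `&` E) (P `&` shiftset A b') b' c'); last by split.
split=> //=; last by move=> m [_ /EAp].
exact: filterI pP (EAp _ E'b'.2).
Qed.

Lemma admissible_chain s0 : admissible s0 ->
  exists f : nat -> stage, forall k, extends (f k) (f k.+1).
Proof.
move=> adm0.
have step (s : {s | admissible s}) : {t : {s | admissible s} | extends (sval s) (sval t)}.
  apply: cid; case: s => s adm; have [t adm_t st] := admissible_extends adm.
  by exists (exist _ t adm_t).
have [f [_ f_ext]] := dependent_choice step (exist _ s0 adm0).
by exists (sval \o f).
Qed.

End Extension.

Section Chain.
Variables (A : set nat) (f : nat -> stage).
Hypothesis f_ext : forall k, extends A (f k) (f k.+1).

Lemma chain_E_sub i j : (i <= j)%nat -> st_E (f j) `<=` st_E (f i).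
Proof.
by apply: (subset_nonincreasing (F := st_E \o f)) => k m /(extends_E (f_ext k))[].
Qed.

Lemma chain_P_sub i j : (i <= j)%nat -> st_P (f j) `<=` st_P (f i).
Proof.
by apply: (subset_nonincreasing (F := st_P \o f)) => k m /(extends_P (f_ext k))[].
Qed.

(* As in the statement, [%N] is not [nat_scope] here: this [+] is the ring
   addition of [nat]. *)
Lemma chain_sumset i j : A (st_b (f i.+1) + st_c (f j.+1))%N.
Proof.
have [ji|ij] := leqP j i.
  have /chain_E_sub/(_ _ (extends_bE (f_ext i))) : (j.+1 <= i.+1)%nat by [].
  by move=> /(extends_E (f_ext j))[].
have /chain_P_sub/(_ _ (extends_cP (f_ext j))) := ij.
by move=> /(extends_P (f_ext i))[_]; rewrite /shiftset /= addrC.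
Qed.

End Chain.

Theorem theorem2p2 (A : set nat) :
  (exists (Phi : nat -> {fset nat}) (p : set_system nat),
     Folner Phi /\ UltraFilter p /\ nonprincipal p /\
     exists d : nat -> R,
       (forall n : nat, density_is Phi (shiftset A n `&` ushift A p) (d n)) /\
       exists x : R, plim_is p d x /\ 0 < x) ->
  exists B C : set nat, infinite_set B /\ infinite_set C /\
    (forall b c : nat, B b -> C c -> A (b + c)%N).
Proof.
move=> [Phi [p [FPhi [pU [np [d [dA [x [dx x_gt0]]]]]]]]].
have adm0 : admissible Phi p A (Stage (ushift A p) setT 0 0).
  by split=> //=; [exact: plim_density_shifts_dense dA dx x_gt0 | exact: filterT].
have [f f_ext] := admissible_chain FPhi np adm0.
exists (range (fun k => st_b (f k.+1))), (range (fun k => st_c (f k.+1))).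
split; [|split].
- by apply: infinite_range_incr => k; exact: extends_b (f_ext k.+1).
- by apply: infinite_range_incr => k; exact: extends_c (f_ext k.+1).
- by move=> _ _ [i _ <-] [j _ <-]; exact: chain_sumset f_ext i j.
Qed.
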